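(* Let $(\mathcal{P},E,U_{E,\mathcal{P}},\mathrm{tok})$ be a system and $C$ a clustering function satisfying the standing properties with constant $\epsilon>0$. Let $\mathcal{A}$ be the set of players $Q$ with $|\mathrm{util}_Q(e,\mathrm{true})|\le\epsilon$ for all $e\in E$, let $\hat{\mathcal{P}}\subseteq\mathcal{A}$, and let $D\subset\mathcal{P}\setminus\hat{\mathcal{P}}$ be a set of delegates. Let $\mathrm{tok}'$ be a new token map in which the players of $\hat{\mathcal{P}}$ delegate all their tokens to $D$: $\mathrm{tok}'(Q)=0$ for $Q\in\hat{\mathcal{P}}$, $\mathrm{tok}'(d)\ge\mathrm{tok}(d)$ for $d\in D$ with $\mathrm{tok}'(D)=\mathrm{tok}(D)+\mathrm{tok}(\hat{\mathcal{P}})$, and $\mathrm{tok}'(Q)=\mathrm{tok}(Q)$ for all other $Q$; utilities are unchanged. If $\mathrm{tok}(\mathcal{A})\ge\mathrm{tok}'([d])$ for every $d\in D$ (where $[d]$ is the voting bloc of $d$), then $$\mathrm{VBE}_{C,\min}(E,\mathcal{P},U_{E,\mathcal{P}},\mathrm{tok}')\ \ge\ \mathrm{VBE}_{C,\min}(E,\mathcal{P},U_{E,\mathcal{P}},\mathrm{tok}).$$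
   Context: A system consists of a finite set of players $\mathcal{P}$, a token map $\mathrm{tok}:\mathcal{P}\to\mathbb{R}^+$ (extended to subsets by summation), binary elections $E=\{e_1,\dots,e_m\}$, and for each player utilities $\mathrm{util}_P(e,\mathrm{true})\in\mathbb{R}$ (with $\mathrm{util}_P(e,\mathrm{false})=-\mathrm{util}_P(e,\mathrm{true})$), forming the utility vector $U_{E,P}\in\mathbb{R}^m$. A clustering function $C$ is an equivalence relation $\sim_C$ on $\mathbb{R}^m$, partitioning players into voting blocs $\mathcal{P}/\!\sim_C$ via $P_i\sim_C P_j$ iff $U_{E,P_i}\sim_C U_{E,P_j}$; $[P]$ is the bloc of $P$. Standing properties of $C$: (i) there is a constant $\epsilon>0$ such that if $|\mathrm{util}_{P_i}(e,\mathrm{true})|\le\epsilon$ and $|\mathrm{util}_{P_j}(e,\mathrm{true})|\le\epsilon$ for all $e\in E$, then $P_i\sim_C P_j$; (ii) if $\mathrm{util}_{P_i}(e,\mathrm{true})$ and $\mathrm{util}_{P_j}(e,\mathrm{true})$ have the same sign for every $e\in E$, then $P_i\sim_C P_j$. $\mathrm{VBE}_{C,\min}(E,\mathcal{P},U_{E,\mathcal{P}},\mathrm{tok})=-\log_2\big(\max_{B\in\mathcal{P}/\sim_C}\mathrm{tok}(B)/\sum_{P\in\mathcal{P}}\mathrm{tok}(P)\big)$. *)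

From HB Require Import structures.
From mathcomp Require Import all_boot all_order all_algebra.
From mathcomp Require Import reals exp.
Set Implicit Arguments. Unset Strict Implicit. Unset Printing Implicit Defensive.
Import Order.TTheory GRing.Theory Num.Theory.
Local Open Scope ring_scope.

Section VBE.
Variables (R : realType) (Pl : finType) (m : nat).

Definition log2 (x : R) : R := ln x / ln 2.

(* utility vector U_{E,P} in R^m, from util_P(e,true) *)
Definition uvec (u : Pl -> 'I_m -> R) (p : Pl) : 'rV[R]_m := \row_(e < m) u p e.

Definition bloc (C : rel 'rV[R]_m) (u : Pl -> 'I_m -> R) (p : Pl) : {set Pl} :=
  [set q | C (uvec u q) (uvec u p)].

Definition blocs (C : rel 'rV[R]_m) (u : Pl -> 'I_m -> R) : {set {set Pl}} :=
  [set bloc C u p | p : Pl].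

Definition tokS (tok : Pl -> R) (B : {set Pl}) : R := \sum_(q in B) tok q.

Definition VBEmin (C : rel 'rV[R]_m) (u : Pl -> 'I_m -> R) (tok : Pl -> R) : R :=
  - log2 ((\big[Num.max/0]_(B in blocs C u) tokS tok B) / \sum_(q : Pl) tok q).

Definition clustering_ok (C : rel 'rV[R]_m) (u : Pl -> 'I_m -> R) (eps : R) : Prop :=
  [/\ (forall x, C x x), (forall x y, C x y -> C y x) &
      (forall x y z, C x y -> C y z -> C x z)] /\
  [/\ 0 < eps,
      (forall pi pj : Pl, (forall e, `|u pi e| <= eps) -> (forall e, `|u pj e| <= eps) ->
           C (uvec u pi) (uvec u pj)) &
      (forall pi pj : Pl, (forall e, Num.sg (u pi e) = Num.sg (u pj e)) ->
           C (uvec u pi) (uvec u pj))].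

Definition smallA (u : Pl -> 'I_m -> R) (eps : R) : {set Pl} :=
  [set q | [forall e, `|u q e| <= eps]].

End VBE.

From HB Require Import structures.
From mathcomp Require Import all_boot all_order all_algebra.
From mathcomp Require Import reals exp.
Set Implicit Arguments. Unset Strict Implicit. Unset Printing Implicit Defensive.
Import Order.TTheory GRing.Theory Num.Theory.
Local Open Scope ring_scope.

(* Delegation preserves the total number of tokens, so it suffices to show that
   it does not increase the weight of the heaviest voting bloc. A bloc with no
   delegate only loses tokens. A bloc containing a delegate is the bloc [d] of
   that delegate, whose new weight is bounded by tok(A); and A lies inside a
   single bloc (any two players with utilities of magnitude at most eps are
   clustered together), so tok(A) is at most the old maximal bloc weight. *)

Section SubsetSums.
Variables (R : numDomainType) (I : finType).
Implicit Types (A B D : {set I}) (f : I -> R).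

Lemma ler_sum_subset A B f :
  (forall i, i \in B -> 0 <= f i) -> A \subset B ->
  \sum_(i in A) f i <= \sum_(i in B) f i.
Proof.
move=> f_ge0 sAB; rewrite [X in _ <= X](big_setID A) /= (setIidPr sAB) lerDl.
by apply: sumr_ge0 => i /setDP[/f_ge0].
Qed.

Lemma sum_split_setC A D f : D \subset ~: A ->
  \sum_i f i = \sum_(i in A) f i + \sum_(i in D) f i + \sum_(i in ~: A :\: D) f i.
Proof.
move=> sDA; rewrite (bigID (mem A)) /= -addrA; congr (_ + _).
rewrite (eq_bigl (mem (~: A))) => [|i]; last by rewrite !inE.
by rewrite (big_setID D) /= (setIidPr sDA).
Qed.

End SubsetSums.

Section VotingBlocs.
Variables (R : realType) (Pl : finType) (m : nat).
Variables (C : rel 'rV[R]_m) (u : Pl -> 'I_m -> R).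
Hypotheses (C_refl : forall x, C x x) (C_sym : forall x y, C x y -> C y x)
  (C_trans : forall x y z, C x y -> C y z -> C x z).

Definition max_bloc_tok (tok : Pl -> R) : R :=
  \big[Num.max/0]_(B in blocs C u) tokS tok B.

Lemma VBEminE tok :
  VBEmin C u tok = - log2 (max_bloc_tok tok / \sum_q tok q).
Proof. by []. Qed.

Lemma mem_bloc p : p \in bloc C u p.
Proof. by rewrite inE. Qed.

Lemma bloc_in_blocs p : bloc C u p \in blocs C u.
Proof. exact: imset_f. Qed.

Lemma bloc_eq p d : d \in bloc C u p -> bloc C u p = bloc C u d.
Proof.
rewrite inE => Cdp; apply/setP => q; rewrite !inE.
by apply/idP/idP => Cq; [exact: C_trans Cq (C_sym Cdp) | exact: C_trans Cq Cdp].
Qed.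

Lemma max_bloc_tok_ge0 tok : 0 <= max_bloc_tok tok.
Proof. exact: bigmax_ge_id. Qed.

Lemma le_max_bloc_tok tok p : tokS tok (bloc C u p) <= max_bloc_tok tok.
Proof. exact/le_bigmax_cond/bloc_in_blocs. Qed.

Lemma max_bloc_tok_gt0 tok p : (forall q, 0 <= tok q) -> 0 < tok p ->
  0 < max_bloc_tok tok.
Proof.
move=> tok_ge0 tok_p_gt0; apply: lt_le_trans (le_max_bloc_tok tok p).
apply: lt_le_trans tok_p_gt0 _; rewrite /tokS (bigD1 p) ?mem_bloc //=.
by rewrite lerDl sumr_ge0.
Qed.

Lemma max_bloc_tok_le tok x : 0 <= x ->
  (forall p, tokS tok (bloc C u p) <= x) -> max_bloc_tok tok <= x.
Proof. by move=> x_ge0 le_x; apply: bigmax_le => // _ /imsetP[p _ ->]. Qed.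

Lemma VBEmin_le (tok tok' : Pl -> R) : (forall q, 0 <= tok' q) ->
  \sum_q tok' q = \sum_q tok q -> max_bloc_tok tok' <= max_bloc_tok tok ->
  VBEmin C u tok <= VBEmin C u tok'.
Proof.
move=> tok'_ge0 same_total le_max; rewrite !VBEminE -same_total.
(* With no tokens at all, x / 0 = 0 makes both sides equal to - log2 0. *)
have [total0|total_neq0] := eqVneq (\sum_q tok' q) 0.
  by rewrite total0 invr0 !mulr0.
have total_gt0 : 0 < \sum_q tok' q by rewrite lt_def total_neq0 sumr_ge0.
have [p tok'_p_gt0] : exists p, 0 < tok' p.
  apply/existsP; apply: contraTT total_gt0; rewrite negb_exists => /forallP tok'_le0.
  by rewrite -leNgt sumr_le0 // => q _; rewrite leNgt tok'_le0.
have max'_gt0 := max_bloc_tok_gt0 tok'_ge0 tok'_p_gt0.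
rewrite lerN2 /log2 ler_pM2r ?invr_gt0 ?ln_gt0 ?ltr1n //.
rewrite ler_ln ?posrE ?divr_gt0 ?ler_pM2r ?invr_gt0 //.
exact: lt_le_trans le_max.
Qed.

Section SmallUtilities.
Variable eps : R.
Hypothesis C_small : forall pi pj : Pl, (forall e, `|u pi e| <= eps) ->
  (forall e, `|u pj e| <= eps) -> C (uvec u pi) (uvec u pj).

Lemma smallA_sub_bloc a : a \in smallA u eps -> smallA u eps \subset bloc C u a.
Proof.
rewrite inE => /forallP small_a; apply/subsetP => q; rewrite !inE.
by move=> /forallP small_q; exact: C_small.
Qed.

Lemma tokS_smallA_le tok : (forall q, 0 <= tok q) ->
  tokS tok (smallA u eps) <= max_bloc_tok tok.
Proof.
move=> tok_ge0; have [->|[a Aa]] := set_0Vmem (smallA u eps).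
  by rewrite /tokS big_set0 max_bloc_tok_ge0.
apply: le_trans (le_max_bloc_tok tok a).
by apply: ler_sum_subset (smallA_sub_bloc Aa) => q _.
Qed.

Section Delegation.
Variables (tok tok' : Pl -> R) (Phat D : {set Pl}).
Hypotheses (tok_ge0 : forall q, 0 <= tok q) (sD_Phat : D \subset ~: Phat)
  (tok'_Phat : forall q, q \in Phat -> tok' q = 0)
  (tok'_D : forall d, d \in D -> tok d <= tok' d)
  (tokS_D : tokS tok' D = tokS tok D + tokS tok Phat)
  (tok'_other : forall q, q \notin Phat -> q \notin D -> tok' q = tok q)
  (tok'_bloc_D : forall d, d \in D ->
     tokS tok' (bloc C u d) <= tokS tok (smallA u eps)).

Lemma delegated_tok_ge0 q : 0 <= tok' q.
Proof.
have [qPhat|qPhat] := boolP (q \in Phat); first by rewrite tok'_Phat.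
have [qD|qD] := boolP (q \in D); first exact: le_trans (tok_ge0 q) (tok'_D qD).
by rewrite tok'_other.
Qed.

Lemma delegated_sum : \sum_q tok' q = \sum_q tok q.
Proof.
rewrite (sum_split_setC _ sD_Phat) [RHS](sum_split_setC _ sD_Phat).
rewrite big1 ?add0r => [|q]; last exact: tok'_Phat.
rewrite -[\sum_(q in D) tok' q]/(tokS _ _) tokS_D [tokS tok D + _]addrC.
congr (_ + _); apply: eq_bigr => q /setDP[]; rewrite inE => qPhat qD.
exact: tok'_other.
Qed.

Lemma delegated_tokS_le (B : {set Pl}) :
  [disjoint D & B] -> tokS tok' B <= tokS tok B.
Proof.
move=> disj; apply: ler_sum => q qB.
have qD : q \notin D by rewrite (disjointFl disj qB).
have [qPhat|qPhat] := boolP (q \in Phat); first by rewrite tok'_Phat.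
by rewrite tok'_other.
Qed.

Lemma delegated_max_bloc_tok_le : max_bloc_tok tok' <= max_bloc_tok tok.
Proof.
apply: max_bloc_tok_le (max_bloc_tok_ge0 _) _ => p.
have [disj|/pred0Pn[d /andP[dD d_p]]] := boolP [disjoint D & bloc C u p].
  exact: le_trans (delegated_tokS_le disj) (le_max_bloc_tok tok p).
rewrite (bloc_eq d_p); apply: le_trans (tok'_bloc_D dD) _.
exact: tokS_smallA_le.
Qed.

End Delegation.

End SmallUtilities.

End VotingBlocs.

Theorem theorem4 (R : realType) (Pl : finType) (m : nat)
  (u : Pl -> 'I_m -> R) (tok tok' : Pl -> R)
  (C : rel 'rV[R]_m) (eps : R)
  (Phat D : {set Pl}) :
  (forall q, 0 < tok q) ->
  clustering_ok C u eps ->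
  Phat \subset smallA u eps ->
  D \subset ~: Phat ->
  (forall q, q \in Phat -> tok' q = 0) ->
  (forall d, d \in D -> tok d <= tok' d) ->
  tokS tok' D = tokS tok D + tokS tok Phat ->
  (forall q, q \notin Phat -> q \notin D -> tok' q = tok q) ->
  (forall d, d \in D -> tokS tok' (bloc C u d) <= tokS tok (smallA u eps)) ->
  VBEmin C u tok <= VBEmin C u tok'.
Proof.
move=> tok_gt0 [[C_refl C_sym C_trans] [_ C_small _]] _ sD_Phat tok'_Phat tok'_D
  tokS_D tok'_other tok'_bloc_D.
have tok_ge0 q : 0 <= tok q by exact: ltW.
apply: (VBEmin_le C_refl).
- exact: delegated_tok_ge0 tok_ge0 tok'_Phat tok'_D tok'_other.
- exact: delegated_sum sD_Phat tok'_Phat tokS_D tok'_other.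
- apply: (delegated_max_bloc_tok_le C_sym C_trans C_small tok_ge0 tok'_Phat
    tok'_other).
  exact: tok'_bloc_D.
Qed.
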